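(* The category $\mathsf{PreOrdGrp}$ of preordered groups is not subtractive.
   Context: A preordered group is a pair $(G,P_G)$ with $G$ an additively written group and $P_G\subseteq G$ a submonoid closed under conjugation; morphisms are group homomorphisms $f$ with $f(P_G)\subseteq P_H$. This is $\mathsf{PreOrdGrp}$, a pointed finitely complete category (limits computed componentwise, zero object the trivial group). A pointed finitely complete category is subtractive (in the sense of Z. Janelidze) if for every reflexive internal relation $R\rightarrowtail X\times X$ such that $\langle 1_X,0\rangle\colon X\to X\times X$ factors through $R$, also $\langle 0,1_X\rangle\colon X\to X\times X$ factors through $R$. *)

Set Implicit Arguments.

(* An (additively written, not necessarily abelian) group together with a
   positive cone P : a submonoid closed under conjugation. *)
Record PreOrdGrp : Type := {
  carrier :> Type;
  add : carrier -> carrier -> carrier;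
  zero : carrier;
  opp : carrier -> carrier;
  addA : forall x y z, add x (add y z) = add (add x y) z;
  add0x : forall x, add zero x = x;
  addx0 : forall x, add x zero = x;
  addNx : forall x, add (opp x) x = zero;
  addxN : forall x, add x (opp x) = zero;
  pos : carrier -> Prop;
  pos0 : pos zero;
  posD : forall p q, pos p -> pos q -> pos (add p q);
  posJ : forall g p, pos p -> pos (add (add g p) (opp g))
}.

Record Hom (G H : PreOrdGrp) : Type := {
  hfun :> G -> H;
  hadd : forall x y, hfun (add G x y) = add H (hfun x) (hfun y);
  hpos : forall p, pos G p -> pos H (hfun p)
}.

Definition hom_eq (G H : PreOrdGrp) (f g : Hom G H) : Prop :=
  forall x, f x = g x.

Definition comp (G H K : PreOrdGrp) (g : Hom H K) (f : Hom G H) : Hom G K.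
Proof.
  refine {| hfun := fun x => g (f x) |}.
  - intros x y. rewrite (hadd f), (hadd g). reflexivity.
  - intros p Hp. apply (hpos g), (hpos f), Hp.
Defined.

Definition id_hom (G : PreOrdGrp) : Hom G G.
Proof.
  refine {| hfun := fun x => x |}; auto.
Defined.

Lemma zero_hom_add (H : PreOrdGrp) : zero H = add H (zero H) (zero H).
Proof. rewrite add0x. reflexivity. Qed.

Definition zero_hom (G H : PreOrdGrp) : Hom G H.
Proof.
  refine {| hfun := fun _ => zero H |}.
  - intros; apply zero_hom_add.
  - intros; apply pos0.
Defined.

Definition prod_pog (G H : PreOrdGrp) : PreOrdGrp.
Proof.
  refine {| carrier := (G * H)%type;
            add := fun a b => (add G (fst a) (fst b), add H (snd a) (snd b));
            zero := (zero G, zero H);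
            opp := fun a => (opp G (fst a), opp H (snd a));
            pos := fun a => pos G (fst a) /\ pos H (snd a) |}.
  - intros [] [] []; simpl; rewrite !addA; reflexivity.
  - intros []; simpl; rewrite !add0x; reflexivity.
  - intros []; simpl; rewrite !addx0; reflexivity.
  - intros []; simpl; rewrite !addNx; reflexivity.
  - intros []; simpl; rewrite !addxN; reflexivity.
  - simpl; split; apply pos0.
  - intros [] [] [] []; simpl in *; split; apply posD; assumption.
  - intros [] [] []; simpl in *; split; apply posJ; assumption.
Defined.

Definition pair_hom (Z G H : PreOrdGrp) (f : Hom Z G) (g : Hom Z H)
  : Hom Z (prod_pog G H).
Proof.
  refine {| hfun := fun z => (f z, g z) : prod_pog G H |}.
  - intros x y; simpl; rewrite (hadd f), (hadd g); reflexivity.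
  - intros p Hp; simpl; split; [apply (hpos f) | apply (hpos g)]; exact Hp.
Defined.

Definition mono (A B : PreOrdGrp) (m : Hom A B) : Prop :=
  forall (Z : PreOrdGrp) (a b : Hom Z A),
    hom_eq (comp m a) (comp m b) -> hom_eq a b.

Definition factors_through (X R B : PreOrdGrp) (h : Hom X B) (m : Hom R B) : Prop :=
  exists d : Hom X R, hom_eq (comp m d) h.

(* Subtractivity (Z. Janelidze): for every reflexive internal relation
   m : R >-> X × X, if <1_X,0> factors through m then so does <0,1_X>. *)
Definition subtractive : Prop :=
  forall (X R : PreOrdGrp) (m : Hom R (prod_pog X X)),
    mono m ->
    factors_through (pair_hom (id_hom X) (id_hom X)) m ->
    factors_through (pair_hom (id_hom X) (zero_hom X X)) m ->
    factors_through (pair_hom (zero_hom X X) (id_hom X)) m.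

From Stdlib Require Import ZArith Lia.

(* Counterexample: X is Z with its usual order, and R is the relation Z × Z
   on X with the smaller cone { (a, b) | 0 <= b <= a }.  The inclusion R -> X × X
   is bijective, hence a monomorphism, and the diagonal and <1, 0> factor through
   it because (n, n) and (n, 0) lie in the cone for n >= 0.  But <0, 1> would
   have to send the positive element 1 to (0, 1), which is not in the cone. *)

Open Scope Z_scope.

Lemma mono_of_injective {A B : PreOrdGrp} (m : Hom A B) :
  (forall x y, m x = m y -> x = y) -> mono m.
Proof. intros m_inj Z a b eq_ma_mb z. apply m_inj, eq_ma_mb. Qed.

Lemma factors_through_pos {X R B : PreOrdGrp} {h : Hom X B} {m : Hom R B} :
  factors_through h m -> forall p, pos X p -> exists r, pos R r /\ m r = h p.
Proof.
  intros [d eq_md_h] p pos_p. exists (d p).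
  split; [exact (hpos d p pos_p) | apply eq_md_h].
Qed.

Definition Z_ordered : PreOrdGrp.
Proof.
  refine {| carrier := Z; add := Z.add; zero := 0; opp := Z.opp;
            pos := fun z => 0 <= z |}; intros; lia.
Defined.

Definition Z2_dominance : PreOrdGrp.
Proof.
  refine {| carrier := (Z * Z)%type;
            add := fun a b => (fst a + fst b, snd a + snd b);
            zero := (0, 0);
            opp := fun a => (- fst a, - snd a);
            pos := fun a => 0 <= snd a <= fst a |};
  repeat intros [? ?]; simpl in *; try (f_equal; lia); lia.
Defined.

Definition dominance_incl : Hom Z2_dominance (prod_pog Z_ordered Z_ordered).
Proof.
  refine {| hfun := fun a : Z2_dominance => (a : prod_pog Z_ordered Z_ordered) |}.
  - reflexivity.
  - intros [a b] pos_ab; simpl in *; lia.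
Defined.

Definition dominance_diag : Hom Z_ordered Z2_dominance.
Proof.
  refine {| hfun := fun n : Z_ordered => ((n, n) : Z2_dominance) |}.
  - reflexivity.
  - simpl; lia.
Defined.

Definition dominance_inl : Hom Z_ordered Z2_dominance.
Proof.
  refine {| hfun := fun n : Z_ordered => ((n, 0) : Z2_dominance) |}.
  - reflexivity.
  - simpl; lia.
Defined.

Lemma dominance_incl_mono : mono dominance_incl.
Proof. apply mono_of_injective; trivial. Qed.

Lemma dominance_reflexive :
  factors_through (pair_hom (id_hom Z_ordered) (id_hom Z_ordered)) dominance_incl.
Proof. exists dominance_diag; intro n; reflexivity. Qed.

Lemma dominance_contains_first :
  factors_through (pair_hom (id_hom Z_ordered) (zero_hom Z_ordered Z_ordered))
    dominance_incl.
Proof. exists dominance_inl; intro n; reflexivity. Qed.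

Lemma dominance_not_contains_second :
  ~ factors_through (pair_hom (zero_hom Z_ordered Z_ordered) (id_hom Z_ordered))
      dominance_incl.
Proof.
  intro factors.
  destruct (factors_through_pos factors (1 : Z_ordered) ltac:(simpl; lia))
    as [[a b] [pos_ab eq_ab]].
  simpl in pos_ab, eq_ab. injection eq_ab. lia.
Qed.

Theorem corollary3p10 : ~ subtractive.
Proof.
  intro subtr.
  apply dominance_not_contains_second.
  exact (subtr _ _ _ dominance_incl_mono dominance_reflexive dominance_contains_first).
Qed.
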